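(* Let $(X,\mathcal T,P,\leq,\{\sigma_x:x\in X\})$ be a typed topological space and $p\in P$. If $A\subseteq X$ is type-$p$-connected, then (1) $p\vdash CL_n(A)$ is type-$p$-connected for every integer $n>0$, and (2) $p\vdash tr(A)$ is type-$p$-connected.
   Context: A typed topological space $(X,\mathcal T,P,\leq,\{\sigma_x:x\in X\})$ consists of a topological space $(X,\mathcal T)$, a partially ordered set $(P,\leq)$ of types, and for each $x\in X$ a partial function $\sigma_x:\{O\in\mathcal T:x\in O\}\to P$ such that for all $U,V$ in its domain, $\sigma_x(U)\leq\sigma_x(V)$ iff $U\subseteq V$. $U$ is a type-$p$ neighborhood of $x$, written $p\vdash U(x)$, if $U$ is in the domain of $\sigma_x$ and $\sigma_x(U)=p$. $x$ is a $p$-accumulation point of $A$ if every type-$p$ neighborhood of $x$ meets $A$. $p\vdash CL_1(A)=A\cup\{p\text{-accumulation points of }A\}$, $p\vdash CL_n(A)=p\vdash CL_1(p\vdash CL_{n-1}(A))$, $p\vdash tr(A)=\bigcup_{n\ge1}p\vdash CL_n(A)$. A set $A\subseteq X$ is type-$p$-connected if there do not exist two families of type-$p$ neighborhoods $\{p\vdash U(x_i):i\in I\}$ and $\{p\vdash U(x_j):j\in J\}$ (each $U(x_k)$ a type-$p$ neighborhood of the point $x_k$) such that $I\neq\emptyset$, $J\neq\emptyset$, $A=\{x_i:i\in I\}\cup\{x_j:j\in J\}$, and $\left(\bigcup_{i\in I}U(x_i)\right)\cap\left(\bigcup_{j\in J}U(x_j)\right)=\emptyset$. *)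

From HB Require Import structures.
From mathcomp Require Import all_boot all_order.
From mathcomp Require Import boolp classical_sets topology.
Set Implicit Arguments. Unset Strict Implicit. Unset Printing Implicit Defensive.
Import Order.TTheory.
Local Open Scope classical_set_scope.

(* A typing of a topological space T by a poset P: sigma x is a partial
   function (option-valued) on the open neighbourhoods of x. *)
Definition typed_top (T : topologicalType) (d : Order.disp_t) (P : porderType d)
  (sigma : T -> set T -> option P) : Prop :=
  (forall x U p, sigma x U = Some p -> open U /\ U x) /\
  (forall x U V p q, sigma x U = Some p -> sigma x V = Some q ->
     ((p <= q)%O <-> U `<=` V)).

Section Typed.
Variables (T : topologicalType) (d : Order.disp_t) (P : porderType d)
  (sigma : T -> set T -> option P).

Definition type_nbhd (p : P) (x : T) (U : set T) : Prop := sigma x U = Some p.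

Definition p_acc (p : P) (A : set T) (x : T) : Prop :=
  forall U, type_nbhd p x U -> U `&` A !=set0.

Definition CL1 (p : P) (A : set T) : set T := A `|` [set x | p_acc p A x].

(* CLn p n A = p |- CL_n(A) for n >= 1 (CLn p 0 A = A). *)
Definition CLn (p : P) (n : nat) (A : set T) : set T := iter n (CL1 p) A.

Definition tr (p : P) (A : set T) : set T :=
  \bigcup_(n in [set n : nat | (0 < n)%N]) CLn p n A.

Definition type_connected (p : P) (A : set T) : Prop :=
  ~ exists (I J : Type) (xi : I -> T) (Ui : I -> set T)
           (xj : J -> T) (Uj : J -> set T),
      inhabited I /\ inhabited J /\
      (forall i, type_nbhd p (xi i) (Ui i)) /\
      (forall j, type_nbhd p (xj j) (Uj j)) /\
      A = range xi `|` range xj /\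
      (\bigcup_i Ui i) `&` (\bigcup_j Uj j) = set0.
End Typed.

From HB Require Import structures.
From mathcomp Require Import all_boot all_order.
From mathcomp Require Import boolp classical_sets topology.
Set Implicit Arguments. Unset Strict Implicit. Unset Printing Implicit Defensive.
Local Open Scope classical_set_scope.

(* Restricting a type-p separation of a set to the indices whose points lie in
   a subset B gives a separation of B, so a type-p-connected B lies on one side
   of every separation of any superset.  In a separation of CL_1(A) each side
   already contains a point of A: a type-p neighbourhood U of an accumulation
   point meets A in some a, and a cannot lie on the other side, since its own
   neighbourhood contains a and is disjoint from U.  Hence CL_1, and so every
   CL_n, preserves type-p-connectedness, and tr(A) is the union of an
   increasing chain of type-p-connected sets. *)

Section TypeSeparation.
Variables (T : topologicalType) (d : Order.disp_t) (P : porderType d)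
  (sigma : T -> set T -> option P) (p : P).

Definition type_separation (C : set T) (I J : Type) (xi : I -> T)
    (Ui : I -> set T) (xj : J -> T) (Uj : J -> set T) : Prop :=
  [/\ forall i, type_nbhd sigma p (xi i) (Ui i),
      forall j, type_nbhd sigma p (xj j) (Uj j),
      C = range xi `|` range xj &
      (\bigcup_i Ui i) `&` (\bigcup_j Uj j) = set0].

Lemma type_connected_intro (C : set T) :
  (forall (I J : Type) (xi : I -> T) (Ui : I -> set T) (xj : J -> T)
     (Uj : J -> set T), type_separation C xi Ui xj Uj -> I -> J -> False) ->
  type_connected sigma p C.
Proof.
move=> noSep [I [J [xi [Ui [xj [Uj [[i] [[j] [hi [hj [hC hD]]]]]]]]]]].
by apply: (noSep I J xi Ui xj Uj) => //; split.
Qed.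

Lemma type_separation_not_connected (C : set T) (I J : Type) (xi : I -> T)
    (Ui : I -> set T) (xj : J -> T) (Uj : J -> set T) :
  type_separation C xi Ui xj Uj -> I -> J -> ~ type_connected sigma p C.
Proof.
move=> [hi hj hC hD] i j; apply; exists I, J, xi, Ui, xj, Uj.
by split; [exact: inhabits i | split; [exact: inhabits j | ]].
Qed.

Lemma type_separation_sym (C : set T) (I J : Type) (xi : I -> T)
    (Ui : I -> set T) (xj : J -> T) (Uj : J -> set T) :
  type_separation C xi Ui xj Uj -> type_separation C xj Uj xi Ui.
Proof. by case=> hi hj hC hD; split=> //; rewrite 1?setUC 1?setIC. Qed.

Lemma type_separation_sub (B C : set T) (I J : Type) (xi : I -> T)
    (Ui : I -> set T) (xj : J -> T) (Uj : J -> set T) :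
  B `<=` C -> type_separation C xi Ui xj Uj ->
  type_separation B (fun i : {i | B (xi i)} => xi (sval i)) (Ui \o sval)
                    (fun j : {j | B (xj j)} => xj (sval j)) (Uj \o sval).
Proof.
move=> BC [hi hj hC hD]; split=> [[i _]|[j _]||] //.
- apply/seteqP; split=> [x Bx|x [[[i Bi] _ <-]|[[j Bj] _ <-]]] //.
  by move: (BC x Bx); rewrite hC => -[[i _ xE]|[j _ xE]]; subst x;
    [left; exists (exist _ i Bx) | right; exists (exist _ j Bx)].
- rewrite -subset0 -hD => x [[[i Bi] _ Uix] [[j Bj] _ Ujx]].
  by split; [exists i | exists j].
Qed.

Lemma type_connected_sub_side (B C : set T) (I J : Type) (xi : I -> T)
    (Ui : I -> set T) (xj : J -> T) (Uj : J -> set T) (i : I) (j : J) :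
  type_connected sigma p B -> B `<=` C -> type_separation C xi Ui xj Uj ->
  B (xi i) -> B (xj j) -> False.
Proof.
move=> cB BC /(type_separation_sub BC) sepB Bi Bj.
exact: type_separation_not_connected sepB (exist _ i Bi) (exist _ j Bj) cB.
Qed.

Lemma bigcup_type_connected (K : Type) (D : set K) (F : K -> set T) :
  (forall n m, D n -> D m -> exists2 k, D k & F n `|` F m `<=` F k) ->
  (forall n, D n -> type_connected sigma p (F n)) ->
  type_connected sigma p (\bigcup_(n in D) F n).
Proof.
move=> dirF cF; apply: type_connected_intro => I J xi Ui xj Uj sep i0 j0.
have [_ _ hC _] := sep.
have [n Dn Fn] : (\bigcup_(n in D) F n) (xi i0) by rewrite hC; left; exists i0.
have [m Dm Fm] : (\bigcup_(n in D) F n) (xj j0) by rewrite hC; right; exists j0.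
have [k Dk Fnm] := dirF n m Dn Dm.
apply: (type_connected_sub_side (cF k Dk) _ sep) (Fnm _ (or_introl Fn))
  (Fnm _ (or_intror Fm)).
exact: bigcup_sup.
Qed.

Lemma CLn_mono (A : set T) (n m : nat) :
  (n <= m)%N -> CLn sigma p n A `<=` CLn sigma p m A.
Proof. by move=> /subnK <-; elim: (m - n) => [|k IHk] //= x /IHk; left. Qed.

Hypothesis type_nbhd_mem : forall x U, type_nbhd sigma p x U -> U x.

Lemma type_separation_CL1_meets (A : set T) (I J : Type) (xi : I -> T)
    (Ui : I -> set T) (xj : J -> T) (Uj : J -> set T) :
  type_separation (CL1 sigma p A) xi Ui xj Uj -> I -> exists i, A (xi i).
Proof.
move=> [hi hj hC hD] i.
have : CL1 sigma p A (xi i) by rewrite hC; left; exists i.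
case=> [Ai|acc]; first by exists i.
have [a [Uia Aa]] := acc _ (hi i).
have : CL1 sigma p A a by left.
rewrite hC => -[[i' _ aE]|[j _ aE]]; first by exists i'; rewrite aE.
have Uja : Uj j a by rewrite -aE; apply: type_nbhd_mem.
suff : (set0 : set T) a by [].
by rewrite -hD; split; [exists i | exists j].
Qed.

Lemma CL1_type_connected (A : set T) :
  type_connected sigma p A -> type_connected sigma p (CL1 sigma p A).
Proof.
move=> cA; apply: type_connected_intro => I J xi Ui xj Uj sep i0 j0.
have [i Ai] := type_separation_CL1_meets sep i0.
have [j Aj] := type_separation_CL1_meets (type_separation_sym sep) j0.
exact: type_connected_sub_side cA (@subsetUl _ _ _) sep Ai Aj.
Qed.

Lemma CLn_type_connected (A : set T) n :
  type_connected sigma p A -> type_connected sigma p (CLn sigma p n A).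
Proof. by move=> cA; elim: n => [|n IHn] //; apply: CL1_type_connected. Qed.

End TypeSeparation.

Theorem lemma2p13 (T : topologicalType) (d : Order.disp_t) (P : porderType d)
  (sigma : T -> set T -> option P) (p : P) (A : set T) :
  typed_top sigma -> type_connected sigma p A ->
  (forall n : nat, (0 < n)%N -> type_connected sigma p (CLn sigma p n A)) /\
  type_connected sigma p (tr sigma p A).
Proof.
move=> [nbhd_open _] cA.
have mem x U : type_nbhd sigma p x U -> U x by move=> /nbhd_open [].
have cCL n : type_connected sigma p (CLn sigma p n A).
  exact: CLn_type_connected.
split=> [n _|]; first exact: cCL.
apply: bigcup_type_connected => [n m n0 m0|n _]; last exact: cCL.
exists (maxn n m); first by rewrite /= leq_max n0.
by move=> x [] /CLn_mono; apply; rewrite ?leq_maxl ?leq_maxr.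
Qed.
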